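(* Let $\beta\in(0,2)$, $v\in C([0,1],L(\mathbb{R}^d,\mathbb{R}^n))$ and $w\in\mathcal{C}^\beta(\mathbb{R}^d)$. Then the series $\pi_<(v,w):=\sum_{p=0}^\infty S_{p-1}v\,\Delta_pw$ converges uniformly, $\pi_<(v,w)\in\mathcal{C}^\beta(\mathbb{R}^n)$, and $\|\pi_<(v,w)\|_\beta\lesssim\|v\|_\infty\|w\|_\beta$.
   Context: Index set: pairs $(p,m)$ with either $p=-1,m=0$, or $p\in\mathbb{N}=\{0,1,2,\dots\}$ and $0\le m\le 2^p$. For $p\in\mathbb{N}$, $1\le m\le 2^p$ set $t^0_{pm}=(m-1)2^{-p}$, $t^1_{pm}=(2m-1)2^{-p-1}$, $t^2_{pm}=m2^{-p}$. Rescaled Haar functions: for $p\in\mathbb{N}$, $1\le m\le 2^p$, $\chi_{pm}=2^p$ on $[t^0_{pm},t^1_{pm})$, $=-2^p$ on $[t^1_{pm},t^2_{pm})$, $=0$ elsewhere; $\chi_{00}\equiv1$; $\chi_{p0}\equiv0$ for $p\ge1$. Rescaled Schauder functions: $\varphi_{pm}(t)=\int_0^t\chi_{pm}(s)\,ds$ for $p\in\mathbb{N}$, and $\varphi_{-10}\equiv1$. For continuous $f:[0,1]\to E$ ($E$ a finite-dimensional normed space), coefficients: $f_{-10}=f(0)$, $f_{00}=f(1)-f(0)$, $f_{p0}=0$ for $p\ge1$, $f_{pm}=2f(t^1_{pm})-f(t^0_{pm})-f(t^2_{pm})$ for $p\in\mathbb{N},m\ge1$. Schauder blocks: $\Delta_pf=\sum_{m=0}^{2^p}f_{pm}\varphi_{pm}$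 ($p\ge-1$), $S_pf=\sum_{q=-1}^p\Delta_qf$ (so $S_{-1}f\equiv f(0)$ and $S_pf$ is the piecewise linear interpolation of $f$ at the points $k2^{-p-1}$). For $\alpha>0$, $\|f\|_\alpha:=\sup_{p,m}2^{p\alpha}|f_{pm}|$ and $\mathcal{C}^\alpha(E):=\{f\in C([0,1],E):\|f\|_\alpha<\infty\}$. $\|\cdot\|_\infty$ is the sup norm; $\lesssim$ hides a constant independent of the functions. *)

From Stdlib Require Import Reals Lra.
Open Scope R_scope.

Fixpoint rsum (n : nat) (f : nat -> R) : R :=
  match n with O => 0 | S k => rsum k f + f k end.

Fixpoint rmaxn (n : nat) (f : nat -> R) : R :=
  match n with O => 0 | S k => Rmax (rmaxn k f) (f k) end.

(* Vectors of R^d are represented as nat -> R (coordinates 0..d-1);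
   norm: max norm. *)
Definition vnorm (d : nat) (x : nat -> R) : R := rmaxn d (fun i => Rabs (x i)).

(* Linear maps R^d -> R^n are matrices nat -> nat -> R (a i j, i<n, j<d);
   norm: the operator norm induced by the max norms (max row sum). *)
Definition mnorm (n d : nat) (a : nat -> nat -> R) : R :=
  rmaxn n (fun i => rsum d (fun j => Rabs (a i j))).

Definition matvec (d : nat) (a : nat -> nat -> R) (x : nat -> R) : nat -> R :=
  fun i => rsum d (fun j => a i j * x j).

Definition tt0 (p m : nat) : R := (INR m - 1) / 2 ^ p.
Definition tt1 (p m : nat) : R := (2 * INR m - 1) / 2 ^ (S p).
Definition tt2 (p m : nat) : R := INR m / 2 ^ p.

Definition coef (g : R -> R) (p m : nat) : R :=
  2 * g (tt1 p m) - g (tt0 p m) - g (tt2 p m).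

(* rescaled Schauder function phi_{pm}(t) = int_0^t chi_{pm}, p in N, m >= 1,
   written in closed form *)
Definition phi (p m : nat) (t : R) : R :=
  2 ^ p * Rmax 0 (Rmin t (tt1 p m) - tt0 p m)
  - 2 ^ p * Rmax 0 (Rmin t (tt2 p m) - tt1 p m).

(* Delta_p g for p in N (phi_{00}(t) = t, f_{00} = g 1 - g 0, f_{p0} = 0 for p >= 1) *)
Definition Delta (g : R -> R) (p : nat) (t : R) : R :=
  (if Nat.eqb p 0 then (g 1 - g 0) * t else 0)
  + rsum (Nat.pow 2 p) (fun k => coef g p (S k) * phi p (S k) t).

(* Sprev g p = S_{p-1} g = sum_{q=-1}^{p-1} Delta_q g, with Delta_{-1} g = g 0 *)
Fixpoint Sprev (g : R -> R) (p : nat) (t : R) : R :=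
  match p with
  | O => g 0
  | S q => Sprev g q t + Delta g q t
  end.

(* Partial sums sum_{p=0}^{N} S_{p-1} v Delta_p w (componentwise, using linearity) *)
Definition para_partial (d : nat) (v : R -> nat -> nat -> R) (w : R -> nat -> R)
  (N : nat) (t : R) : nat -> R :=
  fun i => rsum (S N) (fun p =>
     rsum d (fun j => Sprev (fun s => v s i j) p t * Delta (fun s => w s j) p t)).

Definition cont01 (g : R -> R) : Prop :=
  forall t, 0 <= t <= 1 -> forall eps, 0 < eps -> exists delta, 0 < delta /\
    forall s, 0 <= s <= 1 -> Rabs (s - t) < delta -> Rabs (g s - g t) < eps.

Definition cont01v (d : nat) (f : R -> nat -> R) : Prop :=
  forall i, (i < d)%nat -> cont01 (fun s => f s i).

Definition cont01m (n d : nat) (v : R -> nat -> nat -> R) : Prop :=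
  forall i j, (i < n)%nat -> (j < d)%nat -> cont01 (fun s => v s i j).

(* HolderBound alpha d f M  :<->  ||f||_alpha <= M, i.e.
   sup_{p,m} 2^{p alpha} |f_{pm}| <= M over all indices (p,m). *)
Definition HolderBound (alpha : R) (d : nat) (f : R -> nat -> R) (M : R) : Prop :=
  (* (p,m) = (-1,0) *)
  Rpower 2 (- alpha) * vnorm d (f 0) <= M /\
  (* (p,m) = (0,0) *)
  vnorm d (fun i => f 1 i - f 0 i) <= M /\
  (* p in N, 1 <= m <= 2^p ; (p>=1, m=0) coefficients vanish *)
  (forall p m, (1 <= m)%nat -> (m <= Nat.pow 2 p)%nat ->
     Rpower 2 (INR p * alpha) * vnorm d (fun i => coef (fun s => f s i) p m) <= M).

(* [Sprev g p] (the paper's S_{p-1} g) is the piecewise-linear interpolation of g on the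
   dyadic grid of step 2^-p: it is bounded by sup |g| and affine on every dyadic cell of
   level p, while [Delta g p] is a sum of hat functions with disjoint supports weighted by
   the Schauder coefficients of g.  Hence the p-th term of the paraproduct is
   O(|v|_oo |w|_beta 2^(-p beta)), and as beta > 0 the series converges uniformly to a
   continuous f.

   On the grid of step 2^-(p+1) every term of index > p vanishes, so the coefficient f_pm
   is that of the p-th partial sum.  Its term of index p contributes S_{p-1}v(t^1_pm) w_pm.
   For q < p both factors of the q-th term are affine on the support of phi_pm, so its
   coefficient is a second difference of a quadratic, of size
   4^-p * 2^q |v|_oo * 2^q 2^(-q beta) |w|_beta.  Summing over q < p is a geometric series
   of ratio 2^(2 - beta) > 1 (this is where beta < 2 is used), dominated by
   2^(-p beta) |v|_oo |w|_beta / (2^(2 - beta) - 1). *)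

From Pilot Require Import Defs.
From Stdlib Require Import Reals Lra Lia Psatz ClassicalEpsilon.
(* [Reals] exports its own [Delta]; make the Schauder block visible again. *)
Import Defs.
Open Scope R_scope.

(** * Finite sums and maxima *)

Lemma rsum_ext n f g : (forall k, (k < n)%nat -> f k = g k) -> rsum n f = rsum n g.
Proof.
  induction n; simpl; intros H; auto.
  rewrite IHn, H by (try intros; try apply H; lia). auto.
Qed.

Lemma rsum_plus n f g : rsum n (fun k => f k + g k) = rsum n f + rsum n g.
Proof. induction n; simpl; [lra|]. rewrite IHn; lra. Qed.

Lemma rsum_scal n c f : rsum n (fun k => c * f k) = c * rsum n f.
Proof. induction n; simpl; [lra|]. rewrite IHn; lra. Qed.

Lemma rsum_const n c : rsum n (fun _ => c) = INR n * c.
Proof. induction n; simpl; [ring|]. rewrite IHn; destruct n; simpl; ring. Qed.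

Lemma rsum_le n f g : (forall k, (k < n)%nat -> f k <= g k) -> rsum n f <= rsum n g.
Proof.
  induction n; simpl; intros H; [lra|].
  assert (rsum n f <= rsum n g) by (apply IHn; intros; apply H; lia).
  assert (f n <= g n) by (apply H; lia). lra.
Qed.

Lemma rsum_zero n f : (forall k, (k < n)%nat -> f k = 0) -> rsum n f = 0.
Proof. intros H. rewrite (rsum_ext n f (fun _ => 0)) by auto. rewrite rsum_const; ring. Qed.

Lemma Rabs_rsum_le n f : Rabs (rsum n f) <= rsum n (fun k => Rabs (f k)).
Proof.
  induction n; simpl; [rewrite Rabs_R0; lra|].
  eapply Rle_trans; [apply Rabs_triang|]. lra.
Qed.

Lemma rsum_single n f k : (k < n)%nat -> (forall m, (m < n)%nat -> m <> k -> f m = 0) ->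
  rsum n f = f k.
Proof.
  induction n; intros Hk H; [lia|]. simpl.
  destruct (Nat.eq_dec k n) as [->|Hn].
  - rewrite rsum_zero; [lra|]. intros; apply H; lia.
  - rewrite IHn, (H n) by (try lia; intros; apply H; lia). lra.
Qed.

Lemma rsum_add n m f : rsum (n + m) f = rsum n f + rsum m (fun k => f (n + k)%nat).
Proof. induction m; simpl; [rewrite Nat.add_0_r; lra|]. rewrite Nat.add_succ_r; simpl. lra. Qed.

Lemma Rabs_rsum_mul_le d a b B : (forall j, (j < d)%nat -> Rabs (b j) <= B) ->
  Rabs (rsum d (fun j => a j * b j)) <= rsum d (fun j => Rabs (a j)) * B.
Proof.
  intros H. eapply Rle_trans; [apply Rabs_rsum_le|].
  rewrite Rmult_comm, <- rsum_scal. apply rsum_le. intros k Hk.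
  rewrite Rabs_mult. specialize (H k Hk). pose proof (Rabs_pos (a k)). nra.
Qed.

Lemma rsum_pow_le c p : 1 < c -> rsum p (fun q => c ^ q) <= c ^ p / (c - 1).
Proof.
  intros Hc. induction p; simpl.
  - apply Rlt_le, Rdiv_lt_0_compat; lra.
  - replace (c * c ^ p / (c - 1)) with (c ^ p / (c - 1) + c ^ p) by (field; lra). lra.
Qed.

Lemma rmaxn_nonneg n f : 0 <= rmaxn n f.
Proof. induction n; simpl; [lra|]. eapply Rle_trans; [apply IHn | apply Rmax_l]. Qed.

Lemma rmaxn_ge n f i : (i < n)%nat -> f i <= rmaxn n f.
Proof.
  induction n; intros H; [lia|]. simpl. destruct (Nat.eq_dec i n) as [->|].
  - apply Rmax_r.
  - eapply Rle_trans; [apply IHn; lia | apply Rmax_l].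
Qed.

Lemma rmaxn_le n f M : 0 <= M -> (forall i, (i < n)%nat -> f i <= M) -> rmaxn n f <= M.
Proof. induction n; simpl; intros H0 H; auto. apply Rmax_lub; auto. Qed.

Lemma rmaxn_lt n f M : 0 < M -> (forall i, (i < n)%nat -> f i < M) -> rmaxn n f < M.
Proof. induction n; simpl; intros H0 H; auto. apply Rmax_lub_lt; auto. Qed.

Lemma vnorm_nonneg d x : 0 <= vnorm d x.
Proof. apply rmaxn_nonneg. Qed.

Lemma Rabs_le_vnorm d x i : (i < d)%nat -> Rabs (x i) <= vnorm d x.
Proof. intros; apply (rmaxn_ge d (fun i => Rabs (x i))); auto. Qed.

Lemma mnorm_nonneg n d a : 0 <= mnorm n d a.
Proof. apply rmaxn_nonneg. Qed.

Lemma row_le_mnorm n d a i : (i < n)%nat -> rsum d (fun j => Rabs (a i j)) <= mnorm n d a.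
Proof. intros; apply (rmaxn_ge n (fun i => rsum d (fun j => Rabs (a i j)))); auto. Qed.

(** * The hat function and dyadic cells *)

Ltac case_Rmax_Rmin :=
  unfold Rmax, Rmin; repeat match goal with
  | |- context [Rle_dec ?x ?y] => destruct (Rle_dec x y)
  | _ : context [Rle_dec ?x ?y] |- _ => destruct (Rle_dec x y)
  end; try lra.

Definition hat (u : R) : R := Rmax 0 (Rmin u (/ 2)) - Rmax 0 (Rmin u 1 - / 2).

Lemma hat_nonpos u : u <= 0 -> hat u = 0.
Proof. intros; unfold hat; case_Rmax_Rmin. Qed.

Lemma hat_ge1 u : 1 <= u -> hat u = 0.
Proof. intros; unfold hat; case_Rmax_Rmin. Qed.

Lemma hat_rise u : 0 <= u <= / 2 -> hat u = u.
Proof. intros; unfold hat; case_Rmax_Rmin. Qed.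

Lemma hat_fall u : / 2 <= u <= 1 -> hat u = 1 - u.
Proof. intros; unfold hat; case_Rmax_Rmin. Qed.

Lemma Rabs_hat_le u : Rabs (hat u) <= / 2.
Proof. unfold Rabs; destruct Rcase_abs; unfold hat; case_Rmax_Rmin. Qed.

Lemma Rmax_Rmin_scal c t a b : 0 < c ->
  c * Rmax 0 (Rmin t a - b) = Rmax 0 (Rmin (c * t) (c * a) - c * b).
Proof. intros Hc. case_Rmax_Rmin; nra. Qed.

Lemma pow2_pos p : 0 < 2 ^ p.
Proof. apply pow_lt; lra. Qed.

Lemma INR_pow2 q : INR (Nat.pow 2 q) = 2 ^ q.
Proof. rewrite pow_INR; reflexivity. Qed.

Lemma phi_hat p m t : phi p (S m) t = hat (t * 2 ^ p - INR m).
Proof.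
  pose proof (pow2_pos p) as Hp. unfold phi, hat.
  rewrite !Rmax_Rmin_scal by exact Hp.
  unfold tt0, tt1, tt2. rewrite S_INR. simpl pow.
  replace (2 ^ p * ((2 * (INR m + 1) - 1) / (2 * 2 ^ p))) with (INR m + / 2) by (field; lra).
  replace (2 ^ p * ((INR m + 1 - 1) / 2 ^ p)) with (INR m) by (field; lra).
  replace (2 ^ p * ((INR m + 1) / 2 ^ p)) with (INR m + 1) by (field; lra).
  rewrite (Rmult_comm (2 ^ p) t). case_Rmax_Rmin.
Qed.

Definition in_cell (q k : nat) (t : R) : Prop := INR k <= t * 2 ^ q <= INR k + 1.

Definition dyadic (q k : nat) : R := INR k / 2 ^ q.

Lemma div2_cases k : k = (2 * Nat.div2 k)%nat \/ k = (2 * Nat.div2 k + 1)%nat.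
Proof. pose proof (Nat.div2_odd k) as E. destruct (Nat.odd k); simpl in E; lia. Qed.

Lemma div2_lt_pow2 p k : (k < Nat.pow 2 (S p))%nat -> (Nat.div2 k < Nat.pow 2 p)%nat.
Proof. rewrite Nat.pow_succ_r'. destruct (div2_cases k); lia. Qed.

Lemma in_cell_double p k t :
  in_cell (S p) (2 * k) t \/ in_cell (S p) (2 * k + 1) t -> in_cell p k t.
Proof.
  unfold in_cell. rewrite plus_INR, !mult_INR. simpl pow. simpl INR. lra.
Qed.

Lemma in_cell_div2 p k t : in_cell (S p) k t -> in_cell p (Nat.div2 k) t.
Proof. intros H. apply in_cell_double. destruct (div2_cases k) as [E|E]; rewrite E in H; auto. Qed.

Lemma cell_exists q t : 0 <= t <= 1 -> exists k, (k < Nat.pow 2 q)%nat /\ in_cell q k t.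
Proof.
  intros Ht. induction q as [|q [k [Hk Hi]]].
  - exists 0%nat. unfold in_cell; simpl; split; [lia | lra].
  - unfold in_cell in *. rewrite Nat.pow_succ_r'. simpl pow.
    destruct (Rle_dec (t * (2 * 2 ^ q)) (2 * INR k + 1)).
    + exists (2 * k)%nat. rewrite mult_INR; simpl INR. split; [lia | lra].
    + exists (2 * k + 1)%nat. rewrite plus_INR, mult_INR; simpl INR. split; [lia | lra].
Qed.

Lemma cell_ancestor e q k : (k < Nat.pow 2 (q + e))%nat ->
  exists k', (k' < Nat.pow 2 q)%nat /\ forall t, in_cell (q + e) k t -> in_cell q k' t.
Proof.
  revert k. induction e; intros k Hk.
  - rewrite Nat.add_0_r in *. exists k; auto.
  - rewrite Nat.add_succ_r in *.
    destruct (IHe (Nat.div2 k) (div2_lt_pow2 _ _ Hk)) as [k' [Hk' H]].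
    exists k'. split; auto. intros t Ht. apply H, in_cell_div2, Ht.
Qed.

Lemma in_cell_01 q k t : (k < Nat.pow 2 q)%nat -> in_cell q k t -> 0 <= t <= 1.
Proof.
  intros Hk Hi. unfold in_cell in Hi. pose proof (pow2_pos q).
  assert (INR (S k) <= INR (Nat.pow 2 q)) by (apply le_INR; lia).
  rewrite S_INR, INR_pow2 in H0. pose proof (pos_INR k). split; nra.
Qed.

Lemma dyadic_scale q k : dyadic q k * 2 ^ q = INR k.
Proof. unfold dyadic. field. apply pow_nonzero; lra. Qed.

Lemma dyadic_double p k : dyadic (S p) (2 * k) = dyadic p k.
Proof. unfold dyadic. rewrite mult_INR. simpl. field. apply pow_nonzero; lra. Qed.

Lemma dyadic_succ p k : dyadic p (S k) = dyadic p k + 2 * / 2 ^ S p.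
Proof. unfold dyadic. rewrite S_INR. simpl pow. field. apply pow_nonzero; lra. Qed.

Lemma dyadic_mid p k : dyadic (S p) (2 * k + 1) = dyadic p k + / 2 ^ S p.
Proof. unfold dyadic. rewrite plus_INR, mult_INR. simpl. field. apply pow_nonzero; lra. Qed.

Lemma dyadic_01 q k : (k <= Nat.pow 2 q)%nat -> 0 <= dyadic q k <= 1.
Proof.
  intros Hk. pose proof (dyadic_scale q k). pose proof (pow2_pos q).
  assert (INR k <= 2 ^ q) by (rewrite <- INR_pow2; apply le_INR; auto).
  pose proof (pos_INR k). split; nra.
Qed.

Lemma in_cell_dyadic p k :
  in_cell p k (dyadic p k) /\ in_cell p k (dyadic (S p) (2 * k + 1)) /\ in_cell p k (dyadic p (S k)).
Proof.
  unfold in_cell. rewrite !dyadic_scale, S_INR. split; [lra|]. split; [|lra].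
  unfold dyadic. rewrite plus_INR, mult_INR. simpl INR. simpl pow.
  replace (((1 + 1) * INR k + 1) / (2 * 2 ^ p) * 2 ^ p) with (INR k + / 2)
    by (field; apply pow_nonzero; lra). lra.
Qed.

Lemma coef_dyadic g p k : coef g p (S k) =
  2 * g (dyadic (S p) (2 * k + 1)) - g (dyadic p k) - g (dyadic p (S k)).
Proof.
  unfold coef, tt0, tt1, tt2, dyadic. rewrite plus_INR, mult_INR, S_INR. simpl INR.
  replace (2 * (INR k + 1) - 1) with ((1 + 1) * INR k + 1) by ring.
  replace (INR k + 1 - 1) with (INR k) by ring. reflexivity.
Qed.

Lemma coef_rsum N (F : nat -> R -> R) p m :
  coef (fun s => rsum N (fun q => F q s)) p m = rsum N (fun q => coef (F q) p m).
Proof. induction N; unfold coef in *; simpl; [ring|]. rewrite <- IHN. ring. Qed.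

(** * Local form of the Schauder blocks *)

Lemma Delta_cell g p k t : (k < Nat.pow 2 p)%nat -> in_cell p k t ->
  Delta g p t = (if Nat.eqb p 0 then (g 1 - g 0) * t else 0)
                + coef g p (S k) * hat (t * 2 ^ p - INR k).
Proof.
  intros Hk Ht. unfold Delta. f_equal.
  rewrite (rsum_single _ _ k Hk), phi_hat; auto.
  intros m Hm Hmk. rewrite phi_hat. unfold in_cell in Ht.
  destruct (Nat.lt_ge_cases m k).
  - assert (INR (S m) <= INR k) by (apply le_INR; lia). rewrite S_INR in *.
    rewrite hat_ge1 by lra. ring.
  - assert (INR (S k) <= INR m) by (apply le_INR; lia). rewrite S_INR in *.
    rewrite hat_nonpos by lra. ring.
Qed.

Lemma Delta0_at_0 g : Delta g 0 0 = 0.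
Proof.
  rewrite (Delta_cell g 0 0 0) by (unfold in_cell; simpl; lia || lra).
  simpl. rewrite hat_nonpos; lra.
Qed.

Lemma Delta0_at_1 g : Delta g 0 1 = g 1 - g 0.
Proof.
  rewrite (Delta_cell g 0 0 1) by (unfold in_cell; simpl; lia || lra).
  simpl. rewrite hat_ge1; lra.
Qed.

Lemma Delta_grid g q t K : 0 <= t <= 1 -> t * 2 ^ S q = INR K -> Delta g (S q) t = 0.
Proof.
  intros Ht HK. destruct (cell_exists (S q) t Ht) as [k [Hk Hi]].
  rewrite (Delta_cell g _ k t Hk Hi). unfold in_cell in Hi. rewrite HK in *. simpl Nat.eqb; cbv iota.
  assert (k <= K)%nat by (apply INR_le; lra).
  assert (K <= S k)%nat by (apply INR_le; rewrite S_INR; lra).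
  assert (K = k \/ K = S k)%nat as [-> | ->] by lia.
  - rewrite hat_nonpos; lra.
  - rewrite S_INR, hat_ge1; lra.
Qed.

Lemma Rabs_Delta_le q t : 0 <= t <= 1 -> exists k, (k < Nat.pow 2 (S q))%nat /\
  forall g, Rabs (Delta g (S q) t) <= Rabs (coef g (S q) (S k)) / 2.
Proof.
  intros Ht. destruct (cell_exists (S q) t Ht) as [k [Hk Hi]]. exists k. split; auto.
  intros g. rewrite (Delta_cell g _ k t Hk Hi). simpl Nat.eqb; cbv iota.
  rewrite Rplus_0_l, Rabs_mult. pose proof (Rabs_hat_le (t * 2 ^ S q - INR k)).
  pose proof (Rabs_pos (coef g (S q) (S k))). nra.
Qed.

Definition interp (g : R -> R) (q k : nat) (t : R) : R :=
  g (dyadic q k) + (t * 2 ^ q - INR k) * (g (dyadic q (S k)) - g (dyadic q k)).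

Lemma interp_refine g p k t : in_cell (S p) k t ->
  interp g p (Nat.div2 k) t + coef g p (S (Nat.div2 k)) * hat (t * 2 ^ p - INR (Nat.div2 k))
  = interp g (S p) k t.
Proof.
  intros Ht. destruct (div2_cases k) as [E|E]; remember (Nat.div2 k) as m eqn:Em; clear Em;
    subst k; unfold in_cell, interp in *; rewrite coef_dyadic.
  - replace (S (2 * m)) with (2 * m + 1)%nat by lia.
    rewrite dyadic_double, mult_INR in *. simpl pow in *. simpl INR in *.
    rewrite hat_rise by lra. ring.
  - replace (S (2 * m + 1)) with (2 * S m)%nat by lia.
    rewrite dyadic_double, plus_INR, mult_INR in *. simpl pow in *. simpl INR in *.
    rewrite hat_fall by lra. ring.
Qed.

(* At level 0 the interpolant is [S_{-1} g] plus the linear part of [Delta_0 g]. *)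
Lemma Sprev_add_lin_cell g p k t : (k < Nat.pow 2 p)%nat -> in_cell p k t ->
  Sprev g p t + (if Nat.eqb p 0 then (g 1 - g 0) * t else 0) = interp g p k t.
Proof.
  revert k. induction p as [|p IH]; intros k Hk Ht.
  - simpl in Hk. replace k with 0%nat by lia.
    unfold interp, dyadic. simpl. unfold Rdiv. rewrite Rinv_1, !Rmult_1_r. ring.
  - simpl Sprev. rewrite (Delta_cell g p (Nat.div2 k) t (div2_lt_pow2 _ _ Hk) (in_cell_div2 _ _ _ Ht)).
    rewrite <- (interp_refine g p k t Ht),
      <- (IH (Nat.div2 k) (div2_lt_pow2 _ _ Hk) (in_cell_div2 _ _ _ Ht)).
    simpl Nat.eqb; cbv iota. ring.
Qed.

Lemma Sprev_cell g q k t : (k < Nat.pow 2 (S q))%nat -> in_cell (S q) k t ->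
  Sprev g (S q) t = interp g (S q) k t.
Proof. intros Hk Ht. rewrite <- (Sprev_add_lin_cell g _ k t Hk Ht). simpl Nat.eqb; cbv iota. ring. Qed.

Lemma Sprev_convex q t : 0 <= t <= 1 -> exists a b l,
  0 <= a <= 1 /\ 0 <= b <= 1 /\ 0 <= l <= 1 /\ forall g, Sprev g q t = (1 - l) * g a + l * g b.
Proof.
  intros Ht. destruct q as [|q].
  - exists 0, 0, 0. repeat split; try lra. intros; simpl; ring.
  - destruct (cell_exists (S q) t Ht) as [k [Hk Hi]].
    exists (dyadic (S q) k), (dyadic (S q) (S k)), (t * 2 ^ S q - INR k).
    unfold in_cell in Hi. repeat split; try apply dyadic_01; try lia; try lra.
    intros g. rewrite (Sprev_cell g q k t Hk). unfold interp. ring. unfold in_cell; lra.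
Qed.

Lemma rsum_Sprev_le d (g : nat -> R -> R) q t V : 0 <= t <= 1 ->
  (forall s, 0 <= s <= 1 -> rsum d (fun j => Rabs (g j s)) <= V) ->
  rsum d (fun j => Rabs (Sprev (g j) q t)) <= V.
Proof.
  intros Ht HV. destruct (Sprev_convex q t Ht) as [a [b [l [Ha [Hb [Hl E]]]]]].
  apply Rle_trans with (rsum d (fun j => (1 - l) * Rabs (g j a) + l * Rabs (g j b))).
  - apply rsum_le. intros j _. rewrite E. eapply Rle_trans; [apply Rabs_triang|].
    rewrite !Rabs_mult, (Rabs_right (1 - l)), (Rabs_right l) by lra. lra.
  - rewrite rsum_plus, !rsum_scal. pose proof (HV a Ha). pose proof (HV b Hb). nra.
Qed.

Definition affine_on (P : R -> Prop) (f : R -> R) (a : R) : Prop :=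
  exists c, forall t, P t -> f t = c + a * t.

Lemma affine_on_sub (P Q : R -> Prop) f a : (forall t, P t -> Q t) -> affine_on Q f a -> affine_on P f a.
Proof. intros H [c Hc]. exists c. auto. Qed.

Lemma Sprev_affine_cell q k : (k < Nat.pow 2 q)%nat -> exists a b,
  0 <= a <= 1 /\ 0 <= b <= 1 /\
  forall g, affine_on (in_cell q k) (Sprev g q) (if Nat.eqb q 0 then 0 else 2 ^ q * (g b - g a)).
Proof.
  intros Hk. destruct q as [|q].
  - exists 0, 0. repeat split; try lra. intros g. exists (g 0). intros; simpl; ring.
  - exists (dyadic (S q) k), (dyadic (S q) (S k)). repeat split; try apply dyadic_01; try lia.
    intros g. exists (g (dyadic (S q) k) - INR k * (g (dyadic (S q) (S k)) - g (dyadic (S q) k))).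
    intros t Ht. rewrite (Sprev_cell g q k t Hk Ht). unfold interp. simpl Nat.eqb; cbv iota. ring.
Qed.

(* On each half of its support the hat function has slope +1 or -1. *)
Lemma Delta_affine_half q k : (k < Nat.pow 2 (S q))%nat -> exists s, Rabs s = 1 /\
  forall g, affine_on (in_cell (S q) k) (Delta g q)
    ((if Nat.eqb q 0 then g 1 - g 0 else 0) + s * 2 ^ q * coef g q (S (Nat.div2 k))).
Proof.
  intros Hk. pose proof (div2_lt_pow2 _ _ Hk) as Hm.
  destruct (div2_cases k) as [E|E]; remember (Nat.div2 k) as m eqn:Em; clear Em; subst k.
  - exists 1. split; [apply Rabs_R1|]. intros g. exists (- coef g q (S m) * INR m).
    intros t Ht. rewrite (Delta_cell g q m t Hm (in_cell_double q m t (or_introl Ht))).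
    unfold in_cell in Ht. rewrite mult_INR in Ht. simpl pow in Ht. simpl INR in Ht.
    rewrite hat_rise by lra. destruct (Nat.eqb q 0); ring.
  - exists (-1). split; [unfold Rabs; destruct Rcase_abs; lra|].
    intros g. exists (coef g q (S m) * (INR m + 1)).
    intros t Ht. rewrite (Delta_cell g q m t Hm (in_cell_double q m t (or_intror Ht))).
    unfold in_cell in Ht. rewrite plus_INR, mult_INR in Ht. simpl pow in Ht. simpl INR in Ht.
    rewrite hat_fall by lra. destruct (Nat.eqb q 0); ring.
Qed.

(* The product is quadratic with leading coefficient [a b], and [coef] is minus its second
   difference with step [2^-(p+1)]. *)
Lemma coef_affine_mul p k A B a b :
  affine_on (in_cell p k) A a -> affine_on (in_cell p k) B b ->
  coef (fun s => A s * B s) p (S k) = - 2 * a * b * (/ 2 ^ S p) ^ 2.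
Proof.
  intros [c HA] [e HB]. destruct (in_cell_dyadic p k) as [I0 [I1 I2]].
  rewrite coef_dyadic, !HA, !HB by auto. rewrite dyadic_mid, dyadic_succ. ring.
Qed.

Lemma coef_Sprev_mul_Delta h g p k : (k < Nat.pow 2 p)%nat ->
  coef (fun s => Sprev h p s * Delta g p s) p (S k)
  = Sprev h p (dyadic (S p) (2 * k + 1)) * coef g p (S k).
Proof.
  intros Hk. destruct (in_cell_dyadic p k) as [I0 [I1 I2]].
  rewrite (coef_dyadic (fun s => _ * _)), !(Delta_cell g p k _ Hk) by auto.
  rewrite dyadic_mid, dyadic_succ. pose proof (pow2_pos p).
  assert (Hl : dyadic p k * 2 ^ p - INR k = 0) by (rewrite dyadic_scale; ring).
  assert (Hm : (dyadic p k + / 2 ^ S p) * 2 ^ p - INR k = / 2)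
    by (rewrite Rmult_plus_distr_r, dyadic_scale; simpl; field; lra).
  assert (Hr : (dyadic p k + 2 * / 2 ^ S p) * 2 ^ p - INR k = 1)
    by (rewrite Rmult_plus_distr_r, dyadic_scale; simpl; field; lra).
  rewrite Hl, Hm, Hr, (hat_nonpos 0), (hat_rise (/ 2)), (hat_ge1 1) by lra.
  destruct p as [|p]; simpl Sprev; simpl Nat.eqb; cbv iota.
  - unfold dyadic. simpl. field.
  - field.
Qed.

(* For [q < p] both factors are affine on the support of [phi_(p,k)]. *)
Lemma Rabs_coef_Sprev_mul_Delta_low p q k : (q < p)%nat -> (k < Nat.pow 2 p)%nat ->
  exists a b k', 0 <= a <= 1 /\ 0 <= b <= 1 /\ (k' < Nat.pow 2 q)%nat /\
  forall h g, Rabs (coef (fun s => Sprev h q s * Delta g q s) p (S k))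
              <= 2 * 4 ^ q * (/ 2 ^ S p) ^ 2 * (Rabs (h a) + Rabs (h b)) * Rabs (coef g q (S k')).
Proof.
  intros Hqp Hk.
  destruct (cell_ancestor (p - S q) (S q) k) as [k2 [Hk2 Hanc]];
    [replace (S q + (p - S q))%nat with p by lia; exact Hk|].
  replace (S q + (p - S q))%nat with p in Hanc by lia.
  destruct (Delta_affine_half q k2 Hk2) as [sg [Hsg HD]].
  destruct (Sprev_affine_cell q (Nat.div2 k2) (div2_lt_pow2 _ _ Hk2)) as [a [b [Ha [Hb HS]]]].
  exists a, b, (Nat.div2 k2). split; [|split; [|split]]; auto using div2_lt_pow2.
  intros h g.
  rewrite (coef_affine_mul p k _ _ _ _
    (affine_on_sub _ _ _ _ (fun t Ht => in_cell_div2 _ _ _ (Hanc t Ht)) (HS h))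
    (affine_on_sub _ _ _ _ Hanc (HD g))).
  set (H2 := (/ 2 ^ S p) ^ 2). pose proof (pow2_ge_0 (/ 2 ^ S p)) as HH2. fold H2 in HH2.
  pose proof (pow2_pos q). pose proof (Rabs_pos (h a)). pose proof (Rabs_pos (h b)).
  pose proof (Rabs_pos (coef g q (S (Nat.div2 k2)))).
  replace (4 ^ q) with (2 ^ q * 2 ^ q) by (rewrite <- Rpow_mult_distr; f_equal; ring).
  destruct q as [|q']; simpl Nat.eqb; cbv iota.
  - match goal with |- Rabs ?x <= _ => replace x with 0 by ring end.
    rewrite Rabs_R0. apply Rmult_le_pos; [apply Rmult_le_pos|]; nra.
  - set (q := S q') in *.
    assert (Hab : Rabs (h b - h a) <= Rabs (h a) + Rabs (h b))
      by (rewrite <- (Rabs_Ropp (h a)), Rplus_comm; apply Rabs_triang).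
    assert (A : Rabs (-2) = 2) by (unfold Rabs; destruct Rcase_abs; lra).
    rewrite Rplus_0_l, !Rabs_mult, Hsg, A, (Rabs_right (2 ^ q)), (Rabs_right H2) by lra.
    replace (2 * (2 ^ q * Rabs (h b - h a)) * (1 * 2 ^ q * Rabs (coef g q (S (Nat.div2 k2)))) * H2)
      with (2 * (2 ^ q * 2 ^ q) * H2 * Rabs (h b - h a) * Rabs (coef g q (S (Nat.div2 k2)))) by ring.
    apply Rmult_le_compat_r; [lra|]. apply Rmult_le_compat_l; [nra | exact Hab].
Qed.

(** * Continuity and boundedness on [0, 1] *)

Lemma continuity_lipschitz g L : (forall s t, Rabs (g s - g t) <= L * Rabs (s - t)) -> continuity g.
Proof.
  intros H x eps He. pose proof (Rabs_pos L).
  exists (eps / (Rabs L + 1)). split; [apply Rdiv_lt_0_compat; lra|].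
  intros y [_ Hy]. simpl in *. unfold R_dist in *.
  apply Rle_lt_trans with (Rabs L * Rabs (y - x)).
  - eapply Rle_trans; [apply H|]. apply Rmult_le_compat_r; [apply Rabs_pos | apply RRle_abs].
  - apply Rle_lt_trans with (Rabs L * (eps / (Rabs L + 1))).
    + apply Rmult_le_compat_l; lra.
    + apply Rmult_lt_reg_r with (Rabs L + 1); [lra|].
      replace (Rabs L * (eps / (Rabs L + 1)) * (Rabs L + 1)) with (Rabs L * eps) by (field; lra). nra.
Qed.

Lemma continuity_ramp a b : continuity (fun t => Rmax 0 (Rmin t a - b)).
Proof.
  apply (continuity_lipschitz _ 1). intros s t. rewrite Rmult_1_l.
  unfold Rabs; repeat destruct Rcase_abs; case_Rmax_Rmin.
Qed.

Lemma continuity_cst c : continuity (fun _ => c).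
Proof. apply continuity_const. intros x y; reflexivity. Qed.

Lemma continuity_rsum N (F : nat -> R -> R) :
  (forall k, (k < N)%nat -> continuity (F k)) -> continuity (fun t => rsum N (fun k => F k t)).
Proof.
  induction N; intros H; simpl; [apply continuity_cst|].
  apply continuity_plus; [apply IHN; intros; apply H | apply H]; lia.
Qed.

Lemma continuity_Delta g p : continuity (Delta g p).
Proof.
  unfold Delta. apply continuity_plus.
  - destruct (Nat.eqb p 0); [|apply continuity_cst].
    apply continuity_mult; [apply continuity_cst | apply derivable_continuous, derivable_id].
  - apply (continuity_rsum _ (fun k t => coef g p (S k) * phi p (S k) t)). intros k _.
    apply continuity_mult; [apply continuity_cst|]. unfold phi.
    apply continuity_minus; apply continuity_scal, continuity_ramp.
Qed.

Lemma continuity_Sprev g p : continuity (Sprev g p).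
Proof.
  induction p; simpl; [apply continuity_cst|].
  apply continuity_plus; [exact IHp | apply continuity_Delta].
Qed.

Lemma continuity_cont01 g : continuity g -> cont01 g.
Proof.
  intros H t _ eps He. destruct (H t eps He) as [del [Hd Hdel]].
  exists del. split; auto. intros s _ Hs.
  destruct (Req_dec s t) as [->|Hst].
  - rewrite Rminus_diag, Rabs_R0. lra.
  - apply (Hdel s). split; [split; [exact I | auto] | exact Hs].
Qed.

Lemma cont01_uniform_limit (u : nat -> R -> R) f : (forall N, cont01 (u N)) ->
  (forall eps, 0 < eps -> exists N, forall t, 0 <= t <= 1 -> Rabs (u N t - f t) < eps) ->
  cont01 f.
Proof.
  intros Hu Hcv t Ht eps He.
  destruct (Hcv (eps / 3)) as [N HN]; [lra|].
  destruct (Hu N t Ht (eps / 3)) as [del [Hd Hdel]]; [lra|].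
  exists del. split; auto. intros s Hs Hst.
  specialize (Hdel s Hs Hst). pose proof (HN s Hs). pose proof (HN t Ht).
  replace (f s - f t) with (- (u N s - f s) + (u N s - u N t) + (u N t - f t)) by ring.
  eapply Rle_lt_trans; [apply Rabs_triang|]. eapply Rle_lt_trans;
    [apply Rplus_le_compat_r, Rabs_triang|]. rewrite Rabs_Ropp. lra.
Qed.

Definition clamp01 (x : R) : R := Rmax 0 (Rmin x 1).

Lemma cont01_bounded g : cont01 g -> exists B, forall t, 0 <= t <= 1 -> Rabs (g t) <= B.
Proof.
  intros Hg.
  assert (Hc : forall x, 0 <= clamp01 x <= 1) by (intros; unfold clamp01; case_Rmax_Rmin).
  assert (Hid : forall t, 0 <= t <= 1 -> clamp01 t = t) by (intros; unfold clamp01; case_Rmax_Rmin).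
  destruct (continuity_ab_maj (fun x => Rabs (g (clamp01 x))) 0 1) as [M [HM _]]; [lra| |].
  - intros c Hc01 eps He. destruct (Hg c Hc01 eps He) as [del [Hd Hdel]].
    exists del. split; auto. intros x [_ Hx]. simpl in *. unfold R_dist in *.
    rewrite (Hid c Hc01). eapply Rle_lt_trans; [apply Rabs_triang_inv2|].
    apply Hdel; auto. eapply Rle_lt_trans; [|exact Hx].
    unfold clamp01; unfold Rabs; repeat destruct Rcase_abs; case_Rmax_Rmin.
  - exists (Rabs (g (clamp01 M))). intros t Ht. rewrite <- (Hid t Ht). auto.
Qed.

Lemma rsum_abs_bounded d (g : nat -> R -> R) :
  (forall j, (j < d)%nat -> cont01 (g j)) ->
  exists B, forall t, 0 <= t <= 1 -> rsum d (fun j => Rabs (g j t)) <= B.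
Proof.
  induction d; intros H; simpl; [exists 0; intros; lra|].
  destruct IHd as [B1 H1]; [intros; apply H; lia|].
  destruct (cont01_bounded (g d)) as [B2 H2]; [apply H; lia|].
  exists (B1 + B2). intros t Ht. specialize (H1 t Ht). specialize (H2 t Ht). lra.
Qed.

Lemma rmaxn_bounded n (h : nat -> R -> R) :
  (forall i, (i < n)%nat -> exists B, forall t, 0 <= t <= 1 -> h i t <= B) ->
  exists B, forall t, 0 <= t <= 1 -> rmaxn n (fun i => h i t) <= B.
Proof.
  induction n; intros H; simpl; [exists 0; intros; lra|].
  destruct IHn as [B1 H1]; [intros; apply H; lia|].
  destruct (H n) as [B2 H2]; [lia|].
  exists (Rmax B1 B2). intros t Ht. specialize (H1 t Ht). specialize (H2 t Ht).
  apply Rmax_lub; eapply Rle_trans; eauto; [apply Rmax_l | apply Rmax_r].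
Qed.

Lemma mnorm_bounded n d v : cont01m n d v -> exists V, forall t, 0 <= t <= 1 -> mnorm n d (v t) <= V.
Proof.
  intros Hv. apply (rmaxn_bounded n (fun i t => rsum d (fun j => Rabs (v t i j)))).
  intros i Hi. apply (rsum_abs_bounded d (fun j t => v t i j)). intros; apply Hv; auto.
Qed.

(** * Limits of series *)

(* Junk value when [u] diverges. *)
Definition seq_lim (u : nat -> R) : R := epsilon (inhabits 0) (Un_cv u).

Lemma seq_lim_spec u l : Un_cv u l -> Un_cv u (seq_lim u).
Proof. intros H. unfold seq_lim. apply epsilon_spec. exists l; exact H. Qed.

Lemma Un_cv_eventually_const u p c : (forall N, (p <= N)%nat -> u N = c) -> Un_cv u c.
Proof.
  intros H eps He. exists p. intros N HN. unfold R_dist.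
  rewrite H, Rminus_diag, Rabs_R0 by lia. exact He.
Qed.

Lemma Un_cv_tail_bound u c : (forall N M, (N <= M)%nat -> Rabs (u M - u N) <= c N) ->
  Un_cv c 0 -> Un_cv u (seq_lim u) /\ forall N, Rabs (u N - seq_lim u) <= c N.
Proof.
  intros Hu Hc.
  assert (Hcauchy : Cauchy_crit u).
  { intros eps He. destruct (Hc (eps / 2)) as [N0 HN0]; [lra|]. exists N0. intros a b Ha Hb.
    specialize (HN0 N0 (le_n _)). unfold R_dist in *. rewrite Rminus_0_r in HN0.
    pose proof (Hu N0 a Ha). pose proof (Hu N0 b Hb). pose proof (Rle_abs (c N0)).
    replace (u a - u b) with ((u a - u N0) - (u b - u N0)) by ring.
    eapply Rle_lt_trans; [apply Rabs_triang|]. rewrite Rabs_Ropp. lra. }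
  destruct (R_complete u Hcauchy) as [l Hl].
  pose proof (seq_lim_spec u l Hl) as Hlim. split; auto.
  intros N. rewrite Rabs_minus_sym.
  apply (Rle_cv_lim (Un := fun M => Rabs (u (M + N)%nat - u N)) (Vn := fun _ => c N)).
  - intros M. apply Hu. lia.
  - apply cv_cvabs, CV_minus; [apply CV_shift', Hlim | apply (Un_cv_eventually_const _ 0); auto].
  - apply (Un_cv_eventually_const _ 0); auto.
Qed.

Lemma Un_cv_geometric_tail K x : 0 <= x < 1 -> Un_cv (fun N => K * x ^ S N / (1 - x)) 0.
Proof.
  intros Hx eps He. pose proof (Rabs_pos K).
  destruct (pow_lt_1_zero x) with (y := eps * (1 - x) / (Rabs K + 1)) as [N HN].
  - rewrite Rabs_right; lra.
  - apply Rdiv_lt_0_compat; nra.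
  - exists N. intros M HM. specialize (HN M HM). unfold R_dist. rewrite Rminus_0_r.
    pose proof (pow_le x M (proj1 Hx)) as Hp.
    rewrite Rabs_right in HN by lra.
    assert (Hlt : (Rabs K + 1) * x ^ M < eps * (1 - x)).
    { apply (Rmult_lt_reg_r (/ (Rabs K + 1))); [apply Rinv_0_lt_compat; lra|].
      replace ((Rabs K + 1) * x ^ M * / (Rabs K + 1)) with (x ^ M) by (field; lra). exact HN. }
    unfold Rdiv. rewrite !Rabs_mult, Rabs_inv, (Rabs_right (x ^ S M)), (Rabs_right (1 - x))
      by (try apply Rle_ge, pow_le; lra).
    assert (Hs : x ^ S M <= x ^ M) by (simpl; nra).
    apply Rle_lt_trans with (Rabs K * x ^ M * / (1 - x)).
    + apply Rmult_le_compat_r; [left; apply Rinv_0_lt_compat; lra | nra].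
    + replace eps with (eps * (1 - x) * / (1 - x)) by (field; lra).
      apply Rmult_lt_compat_r; [apply Rinv_0_lt_compat; lra | nra].
Qed.

Lemma rsum_geometric_tail (a : nat -> R) K x : 0 <= K -> 0 <= x < 1 ->
  (forall q, (1 <= q)%nat -> Rabs (a q) <= K * x ^ q) ->
  forall N M, (N <= M)%nat -> Rabs (rsum (S M) a - rsum (S N) a) <= K * x ^ S N / (1 - x).
Proof.
  intros HK Hx Ha N M HNM.
  enough (Rabs (rsum (S M) a - rsum (S N) a) <= K * (x ^ S N - x ^ S M) / (1 - x)).
  { eapply Rle_trans; [eassumption|]. unfold Rdiv. apply Rmult_le_compat_r.
    - left; apply Rinv_0_lt_compat; lra.
    - pose proof (pow_le x (S M) (proj1 Hx)). nra. }
  induction HNM as [|M HNM IH].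
  - rewrite !Rminus_diag, Rabs_R0. unfold Rdiv. rewrite Rmult_0_r, Rmult_0_l. lra.
  - change (rsum (S (S M)) a) with (rsum (S M) a + a (S M)).
    replace (rsum (S M) a + a (S M) - rsum (S N) a)
      with ((rsum (S M) a - rsum (S N) a) + a (S M)) by ring.
    eapply Rle_trans; [apply Rabs_triang|]. specialize (Ha (S M) ltac:(lia)).
    replace (K * (x ^ S N - x ^ S (S M)) / (1 - x))
      with (K * (x ^ S N - x ^ S M) / (1 - x) + K * x ^ S M) by (simpl; field; lra).
    lra.
Qed.

(** * Hölder bounds *)

Definition coef_decay (d : nat) (w : R -> nat -> R) (W y : R) : Prop :=
  forall q k j, (k < Nat.pow 2 q)%nat -> (j < d)%nat ->
    Rabs (coef (fun s => w s j) q (S k)) <= W * y ^ q.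

Lemma Rpower2_INR_mul beta p : Rpower 2 (INR p * beta) = Rpower 2 beta ^ p.
Proof. rewrite Rmult_comm, <- Rpower_mult, Rpower_pow; auto. apply exp_pos. Qed.

Lemma Rpower2_inv_bounds beta : 0 < beta < 2 -> 0 < / Rpower 2 beta < 1 /\ 1 < 4 * / Rpower 2 beta.
Proof.
  intros Hb.
  assert (H1 : 1 < Rpower 2 beta) by (rewrite <- (Rpower_O 2) at 1 by lra; apply Rpower_lt; lra).
  assert (H4 : Rpower 2 beta < 4).
  { replace 4 with (Rpower 2 (INR 2)) by (rewrite Rpower_pow by lra; simpl; ring).
    apply Rpower_lt; simpl; lra. }
  split; [split|].
  - apply Rinv_0_lt_compat; lra.
  - rewrite <- Rinv_1. apply Rinv_lt_contravar; lra.
  - apply (Rmult_lt_reg_r (Rpower 2 beta)); [lra|]. field_simplify; lra.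
Qed.

Lemma HolderBound_nonneg beta d f M : HolderBound beta d f M -> 0 <= M.
Proof. intros [_ [H _]]. pose proof (vnorm_nonneg d (fun i => f 1 i - f 0 i)). lra. Qed.

Lemma HolderBound_coef_decay beta d w W : HolderBound beta d w W -> coef_decay d w W (/ Rpower 2 beta).
Proof.
  intros [_ [_ H]] p k j Hk Hj. specialize (H p (S k) ltac:(lia) ltac:(lia)).
  rewrite Rpower2_INR_mul in H. pose proof (exp_pos (beta * ln 2)) as Hr. fold (Rpower 2 beta) in Hr.
  pose proof (pow_lt _ p Hr).
  pose proof (Rabs_le_vnorm d (fun i => coef (fun s => w s i) p (S k)) j Hj).
  rewrite pow_inv. apply Rmult_le_reg_l with (Rpower 2 beta ^ p); auto.
  replace (Rpower 2 beta ^ p * (W * / Rpower 2 beta ^ p)) with W by (field; lra). nra.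
Qed.

(** * The paraproduct *)

Section Paraproduct.

Variables (d n : nat) (v : R -> nat -> nat -> R) (w : R -> nat -> R).

Definition para_term (p : nat) (t : R) (i : nat) : R :=
  rsum d (fun j => Sprev (fun s => v s i j) p t * Delta (fun s => w s j) p t).

Lemma para_partial_term N t i : para_partial d v w N t i = rsum (S N) (fun p => para_term p t i).
Proof. reflexivity. Qed.

Definition paraproduct (t : R) (i : nat) : R := seq_lim (fun N => para_partial d v w N t i).

Lemma cont01_para_partial N i : cont01 (fun t => para_partial d v w N t i).
Proof.
  apply continuity_cont01, (continuity_rsum _ (fun p t => para_term p t i)). intros p _.
  apply (continuity_rsum _ (fun j t => Sprev (fun s => v s i j) p t * Delta (fun s => w s j) p t)).
  intros j _. apply continuity_mult; [apply continuity_Sprev | apply continuity_Delta].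
Qed.

Section Bounds.

Variables V W y : R.
Hypotheses (HV : forall t, 0 <= t <= 1 -> mnorm n d (v t) <= V) (Hw : coef_decay d w W y)
  (HW : 0 <= W) (Hy : 0 <= y).

Lemma sup_mnorm_nonneg : 0 <= V.
Proof. pose proof (mnorm_nonneg n d (v 0)). pose proof (HV 0 ltac:(lra)). lra. Qed.

Lemma row_le_sup_mnorm i s : (i < n)%nat -> 0 <= s <= 1 -> rsum d (fun j => Rabs (v s i j)) <= V.
Proof. intros Hi Hs. eapply Rle_trans; [apply row_le_mnorm | apply HV]; auto. Qed.

Lemma Rabs_para_term_le p t i : (i < n)%nat -> 0 <= t <= 1 -> (1 <= p)%nat ->
  Rabs (para_term p t i) <= V * W / 2 * y ^ p.
Proof.
  intros Hi Ht Hp. destruct p as [|q]; [lia|].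
  destruct (Rabs_Delta_le q t Ht) as [k [Hk HD]].
  unfold para_term. eapply Rle_trans.
  { apply (Rabs_rsum_mul_le d _ _ (W * y ^ S q / 2)). intros j Hj.
    eapply Rle_trans; [apply HD|]. pose proof (Hw (S q) k j Hk Hj). lra. }
  assert (Hs : rsum d (fun j => Rabs (Sprev (fun s => v s i j) (S q) t)) <= V).
  { apply (rsum_Sprev_le d (fun j s => v s i j)); auto. intros; apply row_le_sup_mnorm; auto. }
  pose proof (pow_le y (S q) Hy).
  replace (V * W / 2 * y ^ S q) with (V * (W * y ^ S q / 2)) by field.
  pose proof sup_mnorm_nonneg. apply Rmult_le_compat_r; [nra | exact Hs].
Qed.

Lemma coef_para_term_top p k i : (k < Nat.pow 2 p)%nat -> (i < n)%nat ->
  Rabs (coef (fun s => para_term p s i) p (S k)) <= V * W * y ^ p.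
Proof.
  intros Hk Hi. unfold para_term.
  rewrite (coef_rsum d (fun j s => Sprev (fun s => v s i j) p s * Delta (fun s => w s j) p s)).
  rewrite (rsum_ext d _ _ (fun j _ => coef_Sprev_mul_Delta (fun s => v s i j) (fun s => w s j) p k Hk)).
  eapply Rle_trans; [apply (Rabs_rsum_mul_le d _ _ (W * y ^ p)); intros; apply Hw; auto|].
  rewrite (Rmult_assoc V). apply Rmult_le_compat_r; [pose proof (pow_le y p Hy); nra|].
  destruct (in_cell_dyadic p k) as [_ [Hmid _]].
  apply (rsum_Sprev_le d (fun j s => v s i j)); [apply (in_cell_01 p k); auto|].
  intros; apply row_le_sup_mnorm; auto.
Qed.

Lemma coef_para_term_low p q k i : (q < p)%nat -> (k < Nat.pow 2 p)%nat -> (i < n)%nat ->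
  Rabs (coef (fun s => para_term q s i) p (S k)) <= V * W * (4 * y) ^ q / (2 ^ p * 2 ^ p).
Proof.
  intros Hqp Hk Hi.
  destruct (Rabs_coef_Sprev_mul_Delta_low p q k Hqp Hk) as [a [b [k' [Ha [Hb [Hk' Hc]]]]]].
  set (c := 2 * 4 ^ q * (/ 2 ^ S p) ^ 2).
  assert (Hc0 : 0 <= c)
    by (unfold c; pose proof (pow_le 4 q ltac:(lra)); pose proof (pow2_ge_0 (/ 2 ^ S p)); nra).
  pose proof (pow_le y q Hy).
  unfold para_term.
  rewrite (coef_rsum d (fun j s => Sprev (fun s => v s i j) q s * Delta (fun s => w s j) q s)).
  eapply Rle_trans; [apply Rabs_rsum_le|].
  eapply Rle_trans.
  { apply (rsum_le d _ (fun j => c * W * y ^ q * (Rabs (v a i j) + Rabs (v b i j)))).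
    intros j Hj. eapply Rle_trans; [apply Hc|].
    replace (c * W * y ^ q * (Rabs (v a i j) + Rabs (v b i j)))
      with (c * (Rabs (v a i j) + Rabs (v b i j)) * (W * y ^ q)) by ring.
    apply Rmult_le_compat_l; [pose proof (Rabs_pos (v a i j)); pose proof (Rabs_pos (v b i j)); nra|].
    apply Hw; auto. }
  rewrite rsum_scal, rsum_plus.
  pose proof (row_le_sup_mnorm i a Hi Ha). pose proof (row_le_sup_mnorm i b Hi Hb).
  assert (0 <= c * W * y ^ q) by (apply Rmult_le_pos; [apply Rmult_le_pos|]; auto).
  apply Rle_trans with (c * W * y ^ q * (2 * V)); [apply Rmult_le_compat_l; lra|].
  right. unfold c. rewrite Rpow_mult_distr. simpl pow. field. apply pow_nonzero; lra.
Qed.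

Lemma coef_para_partial_le p k i : (k < Nat.pow 2 p)%nat -> (i < n)%nat -> 1 < 4 * y ->
  Rabs (coef (fun s => para_partial d v w p s i) p (S k)) <= V * W * y ^ p * (1 + 1 / (4 * y - 1)).
Proof.
  intros Hk Hi Hy4.
  rewrite (coef_rsum (S p) (fun q s => para_term q s i)). simpl rsum.
  eapply Rle_trans; [apply Rabs_triang|].
  pose proof (coef_para_term_top p k i Hk Hi) as Htop.
  assert (Hlow : Rabs (rsum p (fun q => coef (fun s => para_term q s i) p (S k)))
                 <= V * W / (2 ^ p * 2 ^ p) * ((4 * y) ^ p / (4 * y - 1))).
  { pose proof (pow2_pos p). pose proof sup_mnorm_nonneg.
    assert (0 <= V * W / (2 ^ p * 2 ^ p))
      by (apply Rmult_le_pos; [nra | left; apply Rinv_0_lt_compat; nra]).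
    eapply Rle_trans; [apply Rabs_rsum_le|].
    eapply Rle_trans; [apply (rsum_le p _ (fun q => V * W / (2 ^ p * 2 ^ p) * (4 * y) ^ q))|].
    - intros q Hq. eapply Rle_trans; [apply coef_para_term_low; auto|]. right; field; nra.
    - rewrite rsum_scal. apply Rmult_le_compat_l; auto. apply rsum_pow_le; auto. }
  replace (V * W * y ^ p * (1 + 1 / (4 * y - 1)))
    with (V * W / (2 ^ p * 2 ^ p) * ((4 * y) ^ p / (4 * y - 1)) + V * W * y ^ p).
  - lra.
  - rewrite Rpow_mult_distr. replace (4 ^ p) with (2 ^ p * 2 ^ p)
      by (rewrite <- Rpow_mult_distr; f_equal; ring).
    field. split; [lra | apply pow_nonzero; lra].
Qed.

Section Convergence.

Hypothesis Hy1 : y < 1.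

Lemma para_partial_cv t i : 0 <= t <= 1 -> (i < n)%nat ->
  Un_cv (fun N => para_partial d v w N t i) (paraproduct t i) /\
  forall N, Rabs (para_partial d v w N t i - paraproduct t i) <= V * W / 2 * y ^ S N / (1 - y).
Proof.
  intros Ht Hi. unfold paraproduct. apply Un_cv_tail_bound; [|apply Un_cv_geometric_tail; lra].
  intros N M HNM. rewrite !para_partial_term.
  apply (rsum_geometric_tail (fun p => para_term p t i)); auto.
  - pose proof sup_mnorm_nonneg. apply Rmult_le_pos; [nra | lra].
  - intros q Hq. apply Rabs_para_term_le; auto; lra.
Qed.

Lemma para_partial_unif_cv : forall eps, 0 < eps -> exists N0, forall N, (N0 <= N)%nat ->
  forall t, 0 <= t <= 1 -> vnorm n (fun i => para_partial d v w N t i - paraproduct t i) < eps.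
Proof.
  intros eps He. destruct (Un_cv_geometric_tail (V * W / 2) y (conj Hy Hy1) eps He) as [N0 HN0].
  exists N0. intros N HN t Ht. apply rmaxn_lt; auto. intros i Hi.
  eapply Rle_lt_trans; [apply (para_partial_cv t i Ht Hi)|].
  specialize (HN0 N HN). unfold R_dist in HN0. rewrite Rminus_0_r in HN0.
  eapply Rle_lt_trans; [apply Rle_abs | exact HN0].
Qed.

Lemma paraproduct_cont01v : cont01v n paraproduct.
Proof.
  intros i Hi. apply (cont01_uniform_limit (fun N t => para_partial d v w N t i)).
  - intros N; apply cont01_para_partial.
  - intros eps He. destruct (para_partial_unif_cv eps He) as [N0 HN0]. exists N0. intros t Ht.
    eapply Rle_lt_trans; [apply (Rabs_le_vnorm n (fun i => _ - _) i Hi) | apply HN0; auto].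
Qed.

(* Every [Delta_q] with [q > p] vanishes on the dyadic grid of step [2^-(p+1)]. *)
Lemma paraproduct_grid p t K i : 0 <= t <= 1 -> (i < n)%nat -> t * 2 ^ S p = INR K ->
  paraproduct t i = para_partial d v w p t i.
Proof.
  intros Ht Hi HK. apply (UL_sequence (fun N => para_partial d v w N t i)).
  - apply para_partial_cv; auto.
  - apply (Un_cv_eventually_const _ p). intros N HN. rewrite !para_partial_term.
    replace (S N) with (S p + (N - p))%nat by lia. rewrite rsum_add, (rsum_zero (N - p)); [ring|].
    intros q _. unfold para_term. apply rsum_zero. intros j _.
    rewrite (Delta_grid _ (p + q) t (K * Nat.pow 2 q)); [ring | auto |].
    change (S (p + q)) with (S p + q)%nat. rewrite pow_add, mult_INR, INR_pow2, <- HK. ring.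
Qed.

Lemma coef_paraproduct p k i : (k < Nat.pow 2 p)%nat -> (i < n)%nat ->
  coef (fun s => paraproduct s i) p (S k) = coef (fun s => para_partial d v w p s i) p (S k).
Proof.
  intros Hk Hi. rewrite !coef_dyadic.
  assert (Hd : forall m, (m <= Nat.pow 2 (S p))%nat -> paraproduct (dyadic (S p) m) i
                         = para_partial d v w p (dyadic (S p) m) i)
    by (intros m Hm; apply (paraproduct_grid p _ m); auto; [apply dyadic_01 | apply dyadic_scale]; auto).
  rewrite <- (dyadic_double p k), <- (dyadic_double p (S k)), !Hd; auto; rewrite Nat.pow_succ_r'; lia.
Qed.

Lemma paraproduct_0 i : (i < n)%nat -> paraproduct 0 i = 0.
Proof.
  intros Hi. rewrite (paraproduct_grid 0 0 0 i) by (simpl; lra || auto).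
  rewrite para_partial_term. simpl. unfold para_term. rewrite rsum_zero; [ring|].
  intros j _. rewrite Delta0_at_0. ring.
Qed.

Lemma paraproduct_1 i : (i < n)%nat ->
  paraproduct 1 i = rsum d (fun j => v 0 i j * (w 1 j - w 0 j)).
Proof.
  intros Hi. rewrite (paraproduct_grid 0 1 2 i) by (simpl; lra || auto).
  rewrite para_partial_term. simpl. unfold para_term. rewrite Rplus_0_l.
  apply rsum_ext. intros j _. rewrite Delta0_at_1. reflexivity.
Qed.

End Convergence.

End Bounds.

End Paraproduct.

Lemma paraproduct_HolderBound d n v w beta V0 W0 V W : 0 < beta < 2 ->
  (forall t, 0 <= t <= 1 -> mnorm n d (v t) <= V0) -> HolderBound beta d w W0 ->
  (forall t, 0 <= t <= 1 -> mnorm n d (v t) <= V) -> HolderBound beta d w W ->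
  HolderBound beta n (paraproduct d v w) ((1 + 1 / (4 * / Rpower 2 beta - 1)) * V * W).
Proof.
  intros Hb HV0 HW0 HV HW.
  destruct (Rpower2_inv_bounds beta Hb) as [Hy Hy4].
  set (r := Rpower 2 beta) in *. set (y := / r) in *.
  assert (Hr : 0 < r) by apply exp_pos.
  set (C := 1 + 1 / (4 * y - 1)).
  assert (HC : 1 <= C) by (unfold C; pose proof (Rdiv_lt_0_compat 1 (4 * y - 1)); lra).
  pose proof (HolderBound_nonneg _ _ _ _ HW0). pose proof (HolderBound_nonneg _ _ _ _ HW) as HWnn.
  pose proof (mnorm_nonneg n d (v 0)). pose proof (HV 0 ltac:(lra)).
  assert (HCVW : 0 <= C * V * W) by (apply Rmult_le_pos; nra).
  pose proof (HolderBound_coef_decay _ _ _ _ HW0) as Hw0.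
  pose proof (HolderBound_coef_decay _ _ _ _ HW) as Hw.
  fold r y in Hw0, Hw.
  split; [|split].
  - assert (Hz : vnorm n (paraproduct d v w 0) <= 0).
    { apply rmaxn_le; [lra|]. intros i Hi. rewrite (paraproduct_0 d n v w V0 W0 y); auto; try lra.
      rewrite Rabs_R0. lra. }
    pose proof (vnorm_nonneg n (paraproduct d v w 0)). pose proof (exp_pos (- beta * ln 2)).
    unfold Rpower. nra.
  - apply rmaxn_le; auto. intros i Hi.
    rewrite (paraproduct_0 d n v w V0 W0 y), (paraproduct_1 d n v w V0 W0 y), Rminus_0_r; auto; try lra.
    eapply Rle_trans; [apply (Rabs_rsum_mul_le d _ _ W)|].
    + intros j Hj. destruct HW as [_ [HW1 _]].
      eapply Rle_trans; [apply (Rabs_le_vnorm d (fun i => w 1 i - w 0 i) j Hj) | exact HW1].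
    + pose proof (row_le_sup_mnorm d n v V HV i 0 Hi ltac:(lra)).
      apply Rle_trans with (V * W); [apply Rmult_le_compat_r; lra|].
      replace (C * V * W) with (C * (V * W)) by ring. assert (0 <= V * W) by nra. nra.
  - intros p m Hm1 Hm2. destruct m as [|k]; [lia|].
    rewrite Rpower2_INR_mul. fold r.
    assert (Hk : (k < Nat.pow 2 p)%nat) by lia.
    assert (Hcoef : vnorm n (fun i => coef (fun s => paraproduct d v w s i) p (S k))
                    <= V * W * y ^ p * C).
    { apply rmaxn_le; [pose proof (pow_le y p ltac:(lra)); apply Rmult_le_pos; nra|]. intros i Hi.
      rewrite (coef_paraproduct d n v w V0 W0 y); auto; try lra.
      apply (coef_para_partial_le d n); auto; lra. }
    assert (Hry : r ^ p * y ^ p = 1) by (unfold y; rewrite <- Rpow_mult_distr, Rinv_r, pow1; lra).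
    pose proof (pow_lt r p ltac:(lra)).
    apply Rle_trans with (r ^ p * (V * W * y ^ p * C)); [apply Rmult_le_compat_l; lra|].
    right. replace (r ^ p * (V * W * y ^ p * C)) with ((r ^ p * y ^ p) * (C * V * W)) by ring.
    rewrite Hry. ring.
Qed.

Theorem mainTheorem2 :
  forall (beta : R) (d n : nat), 0 < beta < 2 ->
  exists C : R, 0 <= C /\
  forall (v : R -> nat -> nat -> R) (w : R -> nat -> R),
    cont01m n d v ->
    cont01v d w ->
    (exists Mw, HolderBound beta d w Mw) ->
    exists f : R -> nat -> R,
      (* uniform convergence on [0,1] of the partial sums to f = pi_<(v,w) *)
      (forall eps, 0 < eps -> exists N0 : nat, forall N : nat, (N0 <= N)%nat ->
         forall t, 0 <= t <= 1 ->
           vnorm n (fun i => para_partial d v w N t i - f t i) < eps) /\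
      (* f in C^beta(R^n) *)
      cont01v n f /\
      (exists Mf, HolderBound beta n f Mf) /\
      (* ||f||_beta <= C ||v||_infty ||w||_beta *)
      (forall V W : R,
         (forall t, 0 <= t <= 1 -> mnorm n d (v t) <= V) ->
         HolderBound beta d w W ->
         HolderBound beta n f (C * V * W)).
Proof.
  intros beta d n Hb.
  destruct (Rpower2_inv_bounds beta Hb) as [Hy Hy4].
  exists (1 + 1 / (4 * / Rpower 2 beta - 1)).
  split; [pose proof (Rdiv_lt_0_compat 1 (4 * / Rpower 2 beta - 1)); lra|].
  intros v w Hv _ [W0 HW0].
  destruct (mnorm_bounded n d v Hv) as [V0 HV0].
  pose proof (HolderBound_coef_decay _ _ _ _ HW0) as Hw0.
  pose proof (HolderBound_nonneg _ _ _ _ HW0) as HW0nn.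
  exists (paraproduct d v w). split; [|split; [|split]].
  - exact (para_partial_unif_cv d n v w V0 W0 _ HV0 Hw0 HW0nn ltac:(lra) ltac:(lra)).
  - exact (paraproduct_cont01v d n v w V0 W0 _ HV0 Hw0 HW0nn ltac:(lra) ltac:(lra)).
  - eexists. exact (paraproduct_HolderBound d n v w beta V0 W0 V0 W0 Hb HV0 HW0 HV0 HW0).
  - intros V W HV HW. exact (paraproduct_HolderBound d n v w beta V0 W0 V W Hb HV0 HW0 HV HW).
Qed.
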